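(* Let $b_x,b_y,u_x,u_y,K,\beta$ be positive constants with $u_y>u_x$ and $b_x\geq b_y$, let $h>0$, and set \[ \phi_1(h)=\frac{b_y\left\{1-\exp\left(-\frac{\beta K u_y}{b_y}h\right)\right\}}{\beta K u_y},\qquad \phi_2(h)=h . \] Consider the discrete system \[ X_{n+1}=\frac{X_n(1+\phi_1(h)b_x)}{1+\phi_1(h)\left(\frac{b_x}{K}X_n+\frac{b_x}{K}Y_n+u_x+\beta Y_n\right)},\qquad Y_{n+1}=\frac{Y_n\{1+\phi_2(h)(b_y+\beta X_n)\}}{1+\phi_2(h)\left(\frac{b_y}{K}X_n+\frac{b_y}{K}Y_n+u_y\right)} . \] Let $\bar X=K(1-u_x/b_x)$, $\bar Y=K(1-u_y/b_y)$, $R_0=\frac{b_y}{b_x}\frac{u_x}{u_y}+\frac{\beta}{u_y}\bar X$, and $E_H^*=(X_H^*,Y_H^* )$ with \[ X_H^*=\frac{b_xu_y-b_yu_x-\beta K(b_y-u_y)}{\beta(\beta K+b_x-b_y)},\qquad Y_H^*=\frac{b_yu_x-b_xu_y+\beta K(b_x-u_x)}{\beta(\beta K+b_x-b_y)} . \] Then, for every $h>0$, the system is locally asymptotically stable around the fixed point (i) $E_0^H=(0,0)$ if $b_x<u_x$ and $b_y<u_y$; (ii) $E_1^H=(\bar X,0)$ if $b_x>u_x$ and $R_0<1$; (iii) $E_2^H=(0,\bar Y)$ if $b_y>u_y$ and $\frac{b_xu_y}{b_y}<u_x+\beta K\left(1-\frac{u_y}{b_y}\right)$; (iv) $E_H^*$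 if $b_x>u_x$, $b_y>u_y$, $\frac{b_xu_y}{b_y}>u_x+\beta K\left(1-\frac{u_y}{b_y}\right)$ and $R_0>1$.
   Context: This is a nonstandard finite-difference discretization (step size $h$) of a host–parasite model with horizontal and perfect vertical transmission; $X,Y$ are uninfected and infected host densities, $b_x,b_y$ birth rates, $u_x,u_y$ death rates, $K$ carrying capacity, $\beta$ transmission coefficient. The paper assumes throughout that $u_y>u_x$ and $b_x\geq b_y$. A fixed point of the map is called (locally asymptotically) stable if both eigenvalues of the Jacobian of the map at the fixed point have modulus strictly less than $1$. *)

From Stdlib Require Import Reals.
From Coquelicot Require Import Coquelicot.
Open Scope R_scope.

Definition phi1 (bX bY uX uY K beta h : R) : R :=
  bY * (1 - exp (- (beta * K * uY / bY) * h)) / (beta * K * uY).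

Definition phi2 (h : R) : R := h.

Definition mapX (bX bY uX uY K beta h : R) (X Y : R) : R :=
  let p := phi1 bX bY uX uY K beta h in
  X * (1 + p * bX) / (1 + p * (bX / K * X + bX / K * Y + uX + beta * Y)).

Definition mapY (bX bY uX uY K beta h : R) (X Y : R) : R :=
  let p := phi2 h in
  Y * (1 + p * (bY + beta * X)) / (1 + p * (bY / K * X + bY / K * Y + uY)).

Definition is_eigenvalue2 (a b c d : R) (l : C) : Prop :=
  ((RtoC a - l) * (RtoC d - l) - RtoC b * RtoC c)%C = RtoC 0.

Definition las_fixed_point (f g : R -> R -> R) (X0 Y0 : R) : Prop :=
  f X0 Y0 = X0 /\ g X0 Y0 = Y0 /\
  forall l : C,
    is_eigenvalue2 (Derive (fun x => f x Y0) X0) (Derive (fun y => f X0 y) Y0)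
                   (Derive (fun x => g x Y0) X0) (Derive (fun y => g X0 y) Y0) l ->
    Cmod l < 1.

Definition Xbar (bX uX K : R) : R := K * (1 - uX / bX).
Definition Ybar (bY uY K : R) : R := K * (1 - uY / bY).
Definition basicR0 (bX bY uX uY K beta : R) : R :=
  bY / bX * (uX / uY) + beta / uY * Xbar bX uX K.
Definition XHstar (bX bY uX uY K beta : R) : R :=
  (bX * uY - bY * uX - beta * K * (bY - uY)) / (beta * (beta * K + bX - bY)).
Definition YHstar (bX bY uX uY K beta : R) : R :=
  (bY * uX - bX * uY + beta * K * (bX - uX)) / (beta * (beta * K + bX - bY)).

From Stdlib Require Import Reals Lra Psatz.
From Coquelicot Require Import Coquelicot.
Open Scope R_scope.

(* At an equilibrium each component of the map is either identically zero along an axis or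
   fixed along its own nullcline, where per-capita gain equals loss.  At the boundary
   equilibria the Jacobian is therefore triangular.  Its diagonal entries are either
   (1 + r gain) / (1 + r loss), which lies in (0, 1) whenever gain < loss, i.e. under the
   threshold conditions, whatever the step size; or 1 - P bX (X / K) with
   P = phi1 / (1 + phi1 bX), so that 0 < P bX < 1, and 0 < X < K.  At the coexistence
   equilibrium the Jacobian is I - M with diagonal entries A, D in (0, 1) and det M = D r,
   and r < 1 is the one place where the choice of phi1 matters: phi1 beta K uY < bY.
   The Jury conditions 0 < det M < tr M < 2 follow. *)

Lemma Cmod_lt_1_of_jury (a b c d : R) (l : C) :
  0 < 1 - (a + d) + (a * d - b * c) -> 0 < 1 + (a + d) + (a * d - b * c) ->
  a * d - b * c < 1 -> is_eigenvalue2 a b c d l -> Cmod l < 1.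
Proof.
  destruct l as [x y]; unfold is_eigenvalue2; intros Hm Hp Hdet Hl.
  assert (Hre := f_equal fst Hl); assert (Him := f_equal snd Hl); simpl in Hre, Him.
  unfold Cmod; rewrite <- sqrt_1; apply sqrt_lt_1_alt; simpl; split; [nra|].
  (* Either l is real, or Re l = tr / 2 and then |l|^2 = det. *)
  assert (Hy : y * (a + d - 2 * x) = 0) by nra.
  destruct (Rmult_integral _ _ Hy) as [-> | Hx]; [|nra].
  destruct (Rlt_or_le x 1); destruct (Rlt_or_le (-1) x); nra.
Qed.

Lemma Cmod_lt_1_of_triangular (a b c d : R) (l : C) :
  b * c = 0 -> -1 < a < 1 -> -1 < d < 1 -> is_eigenvalue2 a b c d l -> Cmod l < 1.
Proof. intros Hbc Ha Hd; apply Cmod_lt_1_of_jury; rewrite Hbc; nra. Qed.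

Lemma Cmod_lt_1_near_identity (A b c D : R) (l : C) :
  0 < A * D - b * c < A + D -> A + D < 2 ->
  is_eigenvalue2 (1 - A) b c (1 - D) l -> Cmod l < 1.
Proof. intros HE HAD; apply Cmod_lt_1_of_jury; lra. Qed.

Lemma Rdiv_unit_interval (n m : R) : 0 < n < m -> 0 < n / m < 1.
Proof. intros [Hn Hnm]; split; [apply Rdiv_lt_0_compat | apply (Rdiv_lt_1 n m)]; lra. Qed.

Lemma nsfd_ratio_bounds (r a b : R) :
  0 < r -> 0 <= a < b -> -1 < (1 + r * a) / (1 + r * b) < 1.
Proof.
  intros Hr [Ha Hab].
  assert (0 <= r * a) by (apply Rmult_le_pos; lra).
  assert (r * a < r * b) by (apply Rmult_lt_compat_l; lra).
  enough (0 < (1 + r * a) / (1 + r * b) < 1) by lra.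
  apply Rdiv_unit_interval; lra.
Qed.

Section Model.
Variables bX bY uX uY K beta h : R.
Hypotheses (bX_gt0 : 0 < bX) (bY_gt0 : 0 < bY) (uX_gt0 : 0 < uX) (uY_gt0 : 0 < uY)
  (K_gt0 : 0 < K) (beta_gt0 : 0 < beta) (h_gt0 : 0 < h).
Let p := phi1 bX bY uX uY K beta h.
Hypotheses (p_gt0 : 0 < p) (p_lt : p * (beta * K * uY) < bY).
Let f := mapX bX bY uX uY K beta h.
Let g := mapY bX bY uX uY K beta h.
Let lossX X Y := bX / K * X + bX / K * Y + uX + beta * Y.
Let lossY X Y := bY / K * X + bY / K * Y + uY.
Let gainY X := bY + beta * X.
Let P := p / (1 + p * bX).
Let Q X := h / (1 + h * gainY X).

Lemma gainY_pos X : 0 <= X -> 0 < gainY X.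
Proof. intros HX; unfold gainY; nra. Qed.

Lemma mapX_axis Y : f 0 Y = 0.
Proof. unfold f, mapX, Rdiv; ring. Qed.

Lemma mapY_axis X : g X 0 = 0.
Proof. unfold g, mapY, Rdiv; ring. Qed.

Lemma mapX_nullcline X Y : lossX X Y = bX -> f X Y = X.
Proof.
  intros Hnull; unfold f, mapX; fold p. unfold lossX in Hnull; rewrite Hnull.
  assert (0 < p * bX) by nra. field; lra.
Qed.

Lemma mapY_nullcline X Y : 0 <= X -> lossY X Y = gainY X -> g X Y = Y.
Proof.
  intros HX Hnull; assert (0 < h * gainY X) by (apply Rmult_lt_0_compat; auto using gainY_pos).
  unfold g, mapY, phi2; unfold lossY, gainY in *; rewrite Hnull; field; lra.
Qed.

Lemma denomX_pos X Y : 0 <= X -> 0 <= Y -> 0 < 1 + p * lossX X Y.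
Proof.
  intros HX HY; assert (0 < bX / K) by (apply Rdiv_lt_0_compat; lra).
  assert (0 < lossX X Y) by (unfold lossX; nra); nra.
Qed.

Lemma denomY_pos X Y : 0 <= X -> 0 <= Y -> 0 < 1 + h * lossY X Y.
Proof.
  intros HX HY; assert (0 < bY / K) by (apply Rdiv_lt_0_compat; lra).
  assert (0 < lossY X Y) by (unfold lossY; nra); nra.
Qed.

Lemma Derive_mapX_X_axis Y :
  0 <= Y -> Derive (fun x => f x Y) 0 = (1 + p * bX) / (1 + p * lossX 0 Y).
Proof.
  intros HY; assert (HD := denomX_pos 0 Y (Rle_refl 0) HY); unfold lossX in *.
  apply is_derive_unique; unfold f, mapX; fold p.
  (* With bX / K opaque, [field] keeps the denominator whose positivity is HD. *)
  auto_derive; [lra|]. set (cX := bX / K) in *. field; lra.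
Qed.

Lemma Derive_mapY_Y_axis X :
  0 <= X -> Derive (fun y => g X y) 0 = (1 + h * gainY X) / (1 + h * lossY X 0).
Proof.
  intros HX; assert (HD := denomY_pos X 0 HX (Rle_refl 0)); unfold lossY, gainY in *.
  apply is_derive_unique; unfold g, mapY, phi2.
  auto_derive; [lra|]. set (cY := bY / K) in *. field; lra.
Qed.

Lemma Derive_mapX_Y_axis Y : Derive (fun y => f 0 y) Y = 0.
Proof.
  rewrite (Derive_ext _ (fun _ => 0)); [apply Derive_const | apply mapX_axis].
Qed.

Lemma Derive_mapY_X_axis X : Derive (fun x => g x 0) X = 0.
Proof.
  rewrite (Derive_ext _ (fun _ => 0)); [apply Derive_const | apply mapY_axis].
Qed.

Lemma Derive_mapX_X_nullcline X Y :
  lossX X Y = bX -> Derive (fun x => f x Y) X = 1 - P * bX * (X / K).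
Proof.
  intros Hnull; unfold lossX in Hnull; assert (0 < p * bX) by nra.
  apply is_derive_unique; unfold f, mapX, P; fold p.
  auto_derive; rewrite Hnull; [lra|]. field; lra.
Qed.

Lemma Derive_mapX_Y_nullcline X Y :
  lossX X Y = bX -> Derive (fun y => f X y) Y = - (P * X * (bX / K + beta)).
Proof.
  intros Hnull; unfold lossX in Hnull; assert (0 < p * bX) by nra.
  apply is_derive_unique; unfold f, mapX, P; fold p.
  auto_derive; rewrite Hnull; [lra|]. field; lra.
Qed.

Lemma Derive_mapY_X_nullcline X Y : 0 <= X -> lossY X Y = gainY X ->
  Derive (fun x => g x Y) X = Q X * Y * (beta - bY / K).
Proof.
  intros HX Hnull; assert (0 < h * gainY X) by (apply Rmult_lt_0_compat; auto using gainY_pos).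
  unfold lossY, gainY in *.
  apply is_derive_unique; unfold g, mapY, phi2, Q, gainY.
  auto_derive; rewrite Hnull; [lra|]. field; lra.
Qed.

Lemma Derive_mapY_Y_nullcline X Y : 0 <= X -> lossY X Y = gainY X ->
  Derive (fun y => g X y) Y = 1 - Q X * bY * (Y / K).
Proof.
  intros HX Hnull; assert (0 < h * gainY X) by (apply Rmult_lt_0_compat; auto using gainY_pos).
  unfold lossY, gainY in *.
  apply is_derive_unique; unfold g, mapY, phi2, Q, gainY.
  auto_derive; rewrite Hnull; [lra|]. field; lra.
Qed.

Lemma P_bX_bounds : 0 < P * bX < 1.
Proof.
  assert (0 < p * bX) by nra.
  replace (P * bX) with (p * bX / (1 + p * bX)) by (unfold P; field; lra).
  apply Rdiv_unit_interval; lra.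
Qed.

Lemma Q_bY_bounds X : 0 <= X -> 0 < Q X * bY < 1.
Proof.
  intros HX; assert (Hg := gainY_pos X HX); assert (0 < h * gainY X) by nra.
  assert (bY <= gainY X) by (unfold gainY; nra).
  replace (Q X * bY) with (h * bY / (1 + h * gainY X)) by (unfold Q; field; lra).
  apply Rdiv_unit_interval; nra.
Qed.

Lemma P_lt_bY : P * (beta * K * uY + bX * bY) < bY.
Proof.
  unfold P; assert (0 < p * bX) by nra.
  apply (Rmult_lt_reg_r (1 + p * bX)); [lra|].
  replace (p / (1 + p * bX) * (beta * K * uY + bX * bY) * (1 + p * bX))
    with (p * (beta * K * uY) + p * bX * bY) by (field; lra).
  nra.
Qed.

Lemma nullclineX_frac X Y : 0 <= X -> 0 <= Y -> lossX X Y = bX -> (X + Y) / K < 1.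
Proof.
  intros HX HY Hnull; apply (Rmult_lt_reg_l bX); [lra|].
  replace (bX * ((X + Y) / K)) with (bX - uX - beta * Y)
    by (unfold lossX in Hnull; rewrite <- Hnull at 1; field; lra).
  nra.
Qed.

Lemma nullclineY_beta_lt X Y : (X + Y) / K < 1 -> lossY X Y = gainY X -> beta * X < uY.
Proof.
  intros Hfrac Hnull; unfold lossY, gainY in Hnull.
  enough (beta * X - uY = bY * ((X + Y) / K - 1)) by nra.
  replace (bY * ((X + Y) / K - 1)) with (bY / K * X + bY / K * Y - bY) by (field; lra).
  lra.
Qed.

Lemma coexistence_ratio_bounds X : 0 < X -> beta * X < uY -> uY < bY -> bY <= bX ->
  0 < P * X * beta * (beta * K + bX - bY) / bY < 1.
Proof.
  intros HX HbetaX HuY HbXY; assert (HP := P_bX_bounds).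
  assert (0 < P) by nra.
  assert (0 < P * X * beta) by (apply Rmult_lt_0_compat; [apply Rmult_lt_0_compat|]; lra).
  assert (0 < beta * K + bX - bY) by nra.
  assert (P * (beta * X) * (beta * K + bX) < P * uY * (beta * K + bX))
    by (apply Rmult_lt_compat_r; [nra | apply Rmult_lt_compat_l; lra]).
  assert (P * uY * bX <= P * bY * bX)
    by (apply Rmult_le_compat_r; [|apply Rmult_le_compat_l]; lra).
  pose proof P_lt_bY.
  apply Rdiv_unit_interval; split; nra.
Qed.

Lemma las_extinction : bX < uX -> bY < uY -> las_fixed_point f g 0 0.
Proof.
  intros HbuX HbuY; split; [apply mapX_axis | split; [apply mapY_axis|]].
  intro l; rewrite Derive_mapX_X_axis, Derive_mapX_Y_axis, Derive_mapY_X_axis, Derive_mapY_Y_axis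
    by lra.
  apply Cmod_lt_1_of_triangular; [ring | |]; apply nsfd_ratio_bounds; unfold lossX, gainY, lossY; lra.
Qed.

Lemma las_disease_free :
  uX < bX -> basicR0 bX bY uX uY K beta < 1 -> las_fixed_point f g (Xbar bX uX K) 0.
Proof.
  intros HuX HR0; set (Xb := Xbar bX uX K).
  assert (Xb_null : lossX Xb 0 = bX) by (unfold lossX, Xb, Xbar; field; repeat split; lra).
  assert (Xb_frac : 0 < Xb / K < 1).
  { replace (Xb / K) with ((bX - uX) / bX) by (unfold Xb, Xbar; field; repeat split; lra).
    apply Rdiv_unit_interval; lra. }
  assert (Xb_pos : 0 < Xb) by (replace Xb with (Xb / K * K) by (field; lra); nra).
  assert (invasion : gainY Xb < lossY Xb 0).
  { enough (lossY Xb 0 - gainY Xb = uY * (1 - basicR0 bX bY uX uY K beta)) by nra.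
    unfold lossY, gainY, Xb, basicR0, Xbar; field; repeat split; lra. }
  split; [apply mapX_nullcline, Xb_null | split; [apply mapY_axis|]].
  intro l.
  rewrite (Derive_mapX_X_nullcline _ _ Xb_null), (Derive_mapX_Y_nullcline _ _ Xb_null),
    Derive_mapY_X_axis, Derive_mapY_Y_axis by lra.
  apply Cmod_lt_1_of_triangular; [ring | |].
  - pose proof P_bX_bounds; nra.
  - apply nsfd_ratio_bounds; [lra|]. split; [apply Rlt_le, gainY_pos|]; lra.
Qed.

Lemma las_infected_only :
  uY < bY -> bX * uY / bY < uX + beta * K * (1 - uY / bY) ->
  las_fixed_point f g 0 (Ybar bY uY K).
Proof.
  intros HuY Hinv; set (Yb := Ybar bY uY K).
  assert (Yb_null : lossY 0 Yb = gainY 0) by (unfold lossY, gainY, Yb, Ybar; field; repeat split; lra).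
  assert (Yb_frac : 0 < Yb / K < 1).
  { replace (Yb / K) with ((bY - uY) / bY) by (unfold Yb, Ybar; field; repeat split; lra).
    apply Rdiv_unit_interval; lra. }
  assert (Yb_pos : 0 < Yb) by (replace Yb with (Yb / K * K) by (field; lra); nra).
  assert (invasion : bX < lossX 0 Yb).
  { enough (lossX 0 Yb - bX = uX + beta * K * (1 - uY / bY) - bX * uY / bY) by lra.
    unfold lossX, Yb, Ybar; field; repeat split; lra. }
  split; [apply mapX_axis | split; [apply mapY_nullcline, Yb_null; lra |]].
  intro l.
  rewrite Derive_mapX_X_axis, Derive_mapX_Y_axis, (Derive_mapY_X_nullcline _ _ (Rle_refl 0) Yb_null),
    (Derive_mapY_Y_nullcline _ _ (Rle_refl 0) Yb_null) by lra.
  apply Cmod_lt_1_of_triangular; [ring | |].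
  - apply nsfd_ratio_bounds; lra.
  - pose proof (Q_bY_bounds 0 (Rle_refl 0)); nra.
Qed.

Lemma las_coexistence X Y :
  0 < X -> 0 < Y -> uY < bY -> bY <= bX -> lossX X Y = bX -> lossY X Y = gainY X ->
  las_fixed_point f g X Y.
Proof.
  intros HX HY HuY HbXY HnullX HnullY.
  assert (XY_frac := nullclineX_frac X Y (Rlt_le _ _ HX) (Rlt_le _ _ HY) HnullX).
  assert (X_frac : 0 < X / K < 1) by (split; [apply Rdiv_lt_0_compat|]; unfold Rdiv in *; nra).
  assert (Y_frac : 0 < Y / K < 1) by (split; [apply Rdiv_lt_0_compat|]; unfold Rdiv in *; nra).
  split; [apply mapX_nullcline, HnullX | split; [apply mapY_nullcline, HnullY; lra |]].
  intro l.
  rewrite (Derive_mapX_X_nullcline _ _ HnullX), (Derive_mapX_Y_nullcline _ _ HnullX),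
    (Derive_mapY_X_nullcline _ _ (Rlt_le _ _ HX) HnullY),
    (Derive_mapY_Y_nullcline _ _ (Rlt_le _ _ HX) HnullY).
  assert (HP := P_bX_bounds); assert (HQ := Q_bY_bounds X (Rlt_le _ _ HX)).
  set (A := P * bX * (X / K)); set (D := Q X * bY * (Y / K)).
  set (r := P * X * beta * (beta * K + bX - bY) / bY).
  assert (det_eq : A * D - - (P * X * (bX / K + beta)) * (Q X * Y * (beta - bY / K)) = D * r)
    by (unfold A, D, r; field; lra).
  assert (A_frac : 0 < A < 1) by (unfold A; nra).
  assert (D_frac : 0 < D < 1) by (unfold D; nra).
  assert (r_frac : 0 < r < 1)
    by (apply coexistence_ratio_bounds; [|apply (nullclineY_beta_lt X Y)|..]; assumption).
  apply Cmod_lt_1_near_identity; nra.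
Qed.
End Model.

Lemma phi1_bounds bX bY uX uY K beta h :
  0 < bY -> 0 < uY -> 0 < K -> 0 < beta -> 0 < h ->
  0 < phi1 bX bY uX uY K beta h /\ phi1 bX bY uX uY K beta h * (beta * K * uY) < bY.
Proof.
  intros HbY HuY HK Hbeta Hh; unfold phi1.
  assert (Hc : 0 < beta * K * uY) by (apply Rmult_lt_0_compat; [apply Rmult_lt_0_compat|]; lra).
  set (e := exp (- (beta * K * uY / bY) * h)).
  assert (He : 0 < e < 1).
  { split; [apply exp_pos|]. rewrite <- exp_0; apply exp_increasing.
    assert (0 < beta * K * uY / bY) by (apply Rdiv_lt_0_compat; lra). nra. }
  split.
  - apply Rdiv_lt_0_compat; nra.
  - replace (bY * (1 - e) / (beta * K * uY) * (beta * K * uY)) with (bY * (1 - e)) by (field; lra).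
    nra.
Qed.

Section Coexistence.
Variables bX bY uX uY K beta : R.
Hypotheses (bX_gt0 : 0 < bX) (bY_gt0 : 0 < bY) (uY_gt0 : 0 < uY) (K_gt0 : 0 < K)
  (beta_gt0 : 0 < beta) (bY_le_bX : bY <= bX).
Let XH := XHstar bX bY uX uY K beta.
Let YH := YHstar bX bY uX uY K beta.

Lemma coexistence_denom_pos : 0 < beta * (beta * K + bX - bY).
Proof. apply Rmult_lt_0_compat; nra. Qed.

Lemma XHstar_pos : bX * uY / bY > uX + beta * K * (1 - uY / bY) -> 0 < XH.
Proof.
  intros Hinv; apply Rdiv_lt_0_compat; [|exact coexistence_denom_pos].
  replace (bX * uY - bY * uX - beta * K * (bY - uY))
    with (bY * (bX * uY / bY - (uX + beta * K * (1 - uY / bY)))) by (field; lra).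
  apply Rmult_lt_0_compat; lra.
Qed.

Lemma YHstar_pos : basicR0 bX bY uX uY K beta > 1 -> 0 < YH.
Proof.
  intros HR0; apply Rdiv_lt_0_compat; [|exact coexistence_denom_pos].
  replace (bY * uX - bX * uY + beta * K * (bX - uX))
    with (bX * uY * (basicR0 bX bY uX uY K beta - 1))
    by (unfold basicR0, Xbar; field; lra).
  apply Rmult_lt_0_compat; [apply Rmult_lt_0_compat|]; lra.
Qed.

Lemma coexistence_nullclines :
  bX / K * XH + bX / K * YH + uX + beta * YH = bX /\
  bY / K * XH + bY / K * YH + uY = bY + beta * XH.
Proof.
  assert (0 < beta * K + bX - bY) by nra.
  unfold XH, YH, XHstar, YHstar; split; field; repeat split; lra.
Qed.
End Coexistence.

Theorem theorem5 (bX bY uX uY K beta : R) :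
  0 < bX -> 0 < bY -> 0 < uX -> 0 < uY -> 0 < K -> 0 < beta ->
  uY > uX -> bX >= bY ->
  forall h : R, 0 < h ->
  let f := mapX bX bY uX uY K beta h in
  let g := mapY bX bY uX uY K beta h in
  (bX < uX -> bY < uY -> las_fixed_point f g 0 0) /\
  (bX > uX -> basicR0 bX bY uX uY K beta < 1 ->
     las_fixed_point f g (Xbar bX uX K) 0) /\
  (bY > uY -> bX * uY / bY < uX + beta * K * (1 - uY / bY) ->
     las_fixed_point f g 0 (Ybar bY uY K)) /\
  (bX > uX -> bY > uY -> bX * uY / bY > uX + beta * K * (1 - uY / bY) ->
     basicR0 bX bY uX uY K beta > 1 ->
     las_fixed_point f g (XHstar bX bY uX uY K beta) (YHstar bX bY uX uY K beta)).
Proof.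
  intros HbX HbY HuX HuY HK Hbeta _ HbXY h Hh f g; apply Rge_le in HbXY.
  destruct (phi1_bounds bX bY uX uY K beta h HbY HuY HK Hbeta Hh) as [Hp Hplt].
  split; [|split; [|split]].
  - intros; apply las_extinction; assumption.
  - intros; apply las_disease_free; assumption.
  - intros; apply las_infected_only; assumption.
  - intros HbuX HbuY Hinv HR0.
    destruct (coexistence_nullclines bX bY uX uY K beta HK Hbeta HbXY) as [HnullX HnullY].
    apply las_coexistence; try assumption.
    + apply XHstar_pos; assumption.
    + apply YHstar_pos; assumption.
Qed.
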